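(* Let $P$ be a poset and $\Lambda$ an $\mathbb{R}$-action on $P$. Let $I$ be an interval of $P$, let $\epsilon\ge0$ and $p\in P$. If $p\in I^\uparrow$ and $\Lambda_\epsilon(p)\in\Lambda_\epsilon(I)^\downarrow$, then $p\in I$.
   Context: An interval of a poset $P$ is a nonempty subset that is convex ($p,q\in I$, $p\le r\le q$ imply $r\in I$) and connected (any two elements are joined by a finite sequence of elements of $I$ with consecutive ones comparable). For $A\subseteq P$, $A^\uparrow=\{p:\exists a\in A,\ a\le p\}$ and $A^\downarrow=\{p:\exists a\in A,\ p\le a\}$. An $\mathbb{R}$-action on $P$ is a family $\{\Lambda_\epsilon\}_{\epsilon\ge0}$ of poset automorphisms of $P$ with $p\le\Lambda_\epsilon(p)$ for all $p$, $\Lambda_0=\mathrm{id}$, and $\Lambda_\epsilon\circ\Lambda_\zeta=\Lambda_{\epsilon+\zeta}$. *)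

From mathcomp Require Import all_boot all_order.
From Stdlib Require Import Reals Relation_Operators.
Set Implicit Arguments. Unset Strict Implicit. Unset Printing Implicit Defensive.
Import Order.Theory.
Local Open Scope order_scope.

Section Defs.
Context {d : Order.disp_t} {P : porderType d}.

Definition upset (A : P -> Prop) : P -> Prop := fun p => exists2 a, A a & a <= p.
Definition downset (A : P -> Prop) : P -> Prop := fun p => exists2 a, A a & p <= a.
Definition set_image (f : P -> P) (A : P -> Prop) : P -> Prop :=
  fun q => exists2 a, A a & q = f a.

Definition convex (I : P -> Prop) : Prop :=
  forall p q r, I p -> I q -> p <= r -> r <= q -> I r.

Definition comp_step (I : P -> Prop) (x y : P) : Prop := I x /\ I y /\ (x >=< y).

Definition connected (I : P -> Prop) : Prop :=
  forall p q, I p -> I q -> clos_refl_trans P (comp_step I) p q.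

Definition interval (I : P -> Prop) : Prop :=
  (exists p, I p) /\ convex I /\ connected I.

Definition poset_automorphism (f : P -> P) : Prop :=
  bijective f /\ forall x y, (f x <= f y) = (x <= y).

(* R-action: family Lambda_eps, eps >= 0 (values at eps < 0 are irrelevant) *)
Definition R_action (L : R -> P -> P) : Prop :=
  (forall e, Rle 0 e -> poset_automorphism (L e)) /\
  (forall e p, Rle 0 e -> p <= L e p) /\
  (forall p, L 0%R p = p) /\
  (forall e z, Rle 0 e -> Rle 0 z -> forall p, L e (L z p) = L (Rplus e z) p).

End Defs.

From mathcomp Require Import all_boot all_order.
From Stdlib Require Import Reals.

Local Open Scope order_scope.

Section UpDownConvex.
Context {d : Order.disp_t} {P : porderType d}.

Lemma convex_upset_downset (I : P -> Prop) (p : P) :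
  convex I -> upset I p -> downset I p -> I p.
Proof. by move=> convI [a Ia ap] [b Ib pb]; exact: convI Ia Ib ap pb. Qed.

Lemma downset_image_reflect (f : P -> P) (A : P -> Prop) (p : P) :
  (forall x y, f x <= f y -> x <= y) ->
  downset (set_image f A) (f p) -> downset A p.
Proof. by move=> f_refl [_ [b Ab ->] fpb]; exists b => //; exact: f_refl. Qed.

Lemma automorphism_reflect (f : P -> P) :
  poset_automorphism f -> forall x y, f x <= f y -> x <= y.
Proof. by move=> [_ f_mono] x y; rewrite f_mono. Qed.

End UpDownConvex.

Theorem proposition2p13 (d : Order.disp_t) (P : porderType d) (L : R -> P -> P)
  (I : P -> Prop) (e : R) (p : P) :
  R_action L -> interval I -> Rle 0 e ->
  upset I p -> downset (set_image (L e) I) (L e p) -> I p.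
Proof.
move=> [L_aut _] [_ [convI _]] e_ge0 upIp downLp.
apply: convex_upset_downset convI upIp _.
apply: downset_image_reflect downLp.
exact: automorphism_reflect (L_aut e e_ge0).
Qed.
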